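(* For the anonymous MIS algorithm described in the context, let $\gamma\xrightarrow{t}\gamma'$ be a transition in which $t$ consists either only of Candidacy moves, or only of Withdrawal? moves all performed by nodes of a single connected candidate set of $\gamma$. If $\mathcal{X}$ is an alive connected candidate set of $\gamma$, then either $\mathcal{X}$ vanishes in this transition, or there exists an alive connected candidate set $\mathcal{X}'$ of $\gamma'$ with $\mathcal{X}'\subseteq\mathcal{X}$.
   Context: $G=(V,E)$ is a finite simple undirected graph; $N(u)$ is the open neighbourhood of $u$. A configuration assigns to each node $u$ a value $s_u\in\{\bot,\top\}$ (written $s_u^\gamma$ in configuration $\gamma$). A rule ''guard $\to$ command'' is enabled on $u$ in $\gamma$ if its guard holds there. A transition $\gamma\xrightarrow{t}\gamma'$ is given by a nonempty set $t$ of moves $(u,r)$ with $r$ enabled on $u$ in $\gamma$, at most one per node, all executed simultaneously from the values in $\gamma$; other nodes keep their values. The algorithm has the rules: (Candidacy) $s_u=\bot\wedge\forall v\in N(u),\ s_v=\bot\ \to\ s_u:=\top$. (Withdrawal?) $s_u=\top\wedge\exists v\in N(u),\ s_v=\top\ \to$ with probability $\frac12$ set $s_u:=\bot$, otherwise leave it unchanged. $\beta(\gamma)=\{u\in V: s_u^\gamma=\top\text{ and }\forall v\in N(u),\ s_v^\gamma=\bot\}$. A set $\mathcal{X}\subseteq V$ is a candidate set of $\gamma$ if every $u\in\mathcal{X}$ has $s_u^\gamma=\top$ and every $v\in N(u)$ with $s_v^\gamma=\top$ belongs to $\mathcal{X}$; it is a connected candidate set if moreover it induces a connected subgraph of $G$.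 A candidate set $\mathcal{X}$ of $\gamma$ is alive in $\gamma$ if Withdrawal? is enabled on at least one node of $\mathcal{X}$ (for connected candidate sets this is equivalent to $|\mathcal{X}|\ge 2$). In a transition $\gamma\to\gamma'$, an alive candidate set $\mathcal{X}$ of $\gamma$ vanishes if every $u\in\mathcal{X}$ satisfies $s_u^{\gamma'}=\bot$ or $u\in\beta(\gamma')$. *)

From mathcomp Require Import all_boot.
Set Implicit Arguments. Unset Strict Implicit. Unset Printing Implicit Defensive.

Section MIS.
Variable V : finType.
Variable e : rel V.

Definition simple_graph := symmetric e /\ irreflexive e.

Definition nbhd (u : V) : {set V} := [set v | e u v].

(* a configuration: true stands for \top, false for \bot *)
Definition config := V -> bool.

Inductive rule := Candidacy | Withdrawal.

Definition cand_guard (g : config) (u : V) : bool :=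
  ~~ g u && [forall v in nbhd u, ~~ g v].

Definition withd_guard (g : config) (u : V) : bool :=
  g u && [exists v in nbhd u, g v].

Definition enabled (g : config) (r : rule) (u : V) : bool :=
  match r with Candidacy => cand_guard g u | Withdrawal => withd_guard g u end.

(* A transition g -t-> g' where t is the set of moves {(u, r u) | u \in t};
   Withdrawal? has a probabilistic outcome: the node ends with \bot or keeps
   its value; every possible outcome is allowed. *)
Definition transition (g : config) (t : {set V}) (r : V -> rule) (g' : config) :=
  t != set0 /\
  (forall u, u \in t -> enabled g (r u) u) /\
  (forall u, u \notin t -> g' u = g u) /\
  (forall u, u \in t -> r u = Candidacy -> g' u = true) /\
  (forall u, u \in t -> r u = Withdrawal -> g' u = false \/ g' u = g u).

Definition beta (g : config) : {set V} :=
  [set u | g u && [forall v in nbhd u, ~~ g v]].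

Definition candidate_set (g : config) (X : {set V}) :=
  forall u, u \in X -> g u /\ (forall v, v \in nbhd u -> g v -> v \in X).

Definition induces_connected (X : {set V}) :=
  forall x y, x \in X -> y \in X ->
    connect [rel a b | (a \in X) && (b \in X) && e a b] x y.

Definition connected_candidate_set (g : config) (X : {set V}) :=
  candidate_set g X /\ induces_connected X.

Definition alive (g : config) (X : {set V}) :=
  exists u, u \in X /\ withd_guard g u.

Definition vanishes (g' : config) (X : {set V}) :=
  forall u, u \in X -> g' u = false \/ u \in beta g'.

End MIS.

From mathcomp Require Import all_boot.

(* A Candidacy move needs an all-bot neighbourhood, so no node adjacent to a
   top node can become top: every top neighbour in [g'] of a node of [X] was
   already top in [g], hence lies in [X].  If [X] does not vanish, some node
   [u] of [X] is top in [g'] together with a top neighbour; the connected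
   component of [u] among the nodes of [X] still top in [g'] is then an alive
   connected candidate set of [g'] inside [X]. *)

Set Implicit Arguments.
Unset Strict Implicit.
Unset Printing Implicit Defensive.

Section Components.

Variables (V : finType) (e : rel V).
Hypothesis e_sym : symmetric e.
Implicit Types (S : {set V}) (u : V).

Definition induced (S : {set V}) : rel V :=
  [rel a b | (a \in S) && (b \in S) && e a b].

Lemma induced_sym S : symmetric (induced S).
Proof. by move=> a b; rewrite /induced /= e_sym [(a \in S) && _]andbC. Qed.

Definition component (S : {set V}) (u : V) : {set V} :=
  [set w in S | connect (induced S) u w].

Lemma component_sub S u : component S u \subset S.
Proof. by apply/subsetP => w; rewrite inE => /andP[]. Qed.

Lemma mem_component S u : u \in S -> u \in component S u.
Proof. by move=> uS; rewrite inE uS connect0. Qed.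

Lemma component_closed S u a b :
  a \in component S u -> induced S a b -> b \in component S u.
Proof.
rewrite !inE => /andP[_ cua] Rab; move: (Rab) => /andP[/andP[_ ->] _] /=.
exact: connect_trans cua (connect1 Rab).
Qed.

Lemma connect_induced_component S u x y :
  x \in component S u -> connect (induced S) x y ->
  connect (induced (component S u)) x y.
Proof.
move=> xC /connectP[p pth ->] {y}.
elim: p x xC pth => [|b p IHp] a aC /=; first by rewrite connect0.
case/andP => Rab pth; have bC := component_closed aC Rab.
apply: connect_trans (IHp b bC pth); apply: connect1.
by move: Rab => /andP[_ eab]; rewrite /induced /= aC bC eab.
Qed.

Lemma component_connected S u : induces_connected e (component S u).
Proof.
move=> x y xC yC; apply: (connect_induced_component xC).
move: xC yC; rewrite !inE => /andP[_ cux] /andP[_ cuy].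
by apply: connect_trans cuy; rewrite (sym_connect_sym (@induced_sym S)).
Qed.

End Components.

Section Transition.

Variables (V : finType) (e : rel V).
Hypothesis e_sym : symmetric e.
Variables (g g' : config V) (t : {set V}) (r : V -> rule).
Hypothesis g_to_g' : transition e g t r g'.

Lemma transition_top_nbr_was_top w z : g w -> e w z -> g' z -> g z.
Proof.
case: g_to_g' => _ [t_enabled [out_t [_ withd]]] gw ewz g'z.
have [zt|zNt] := boolP (z \in t); last by rewrite -out_t.
case rz: (r z).
- have := t_enabled z zt; rewrite rz /= /cand_guard => /andP[_ /forallP/(_ w)].
  by rewrite inE e_sym ewz gw.
- by case: (withd z zt rz) => g'zE; rewrite g'zE in g'z.
Qed.

Lemma component_survivors_candidate_set X u :
  candidate_set e g X ->
  candidate_set e g' (component e [set w in X | g' w] u).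
Proof.
move=> XcandX w wC; have := subsetP (component_sub e _ u) w wC.
rewrite inE => /andP[wX g'w]; split=> // z; rewrite inE => ewz g'z.
have [gw Xclosed] := XcandX w wX.
have gz := transition_top_nbr_was_top gw ewz g'z.
have zX : z \in X by apply: Xclosed; rewrite ?inE.
by apply: component_closed wC _; rewrite /induced /= !inE wX zX g'w g'z ewz.
Qed.

End Transition.

Lemma withd_guard_beta (V : finType) (e : rel V) (g : config V) u :
  withd_guard e g u = g u && (u \notin beta e g).
Proof.
rewrite /withd_guard inE; case: (g u) => //=.
by rewrite negb_forall; apply: eq_existsb => v; rewrite negb_imply negbK.
Qed.

Lemma vanishes_or_withd (V : finType) (e : rel V) (g : config V) X :
  vanishes e g X \/ exists2 u, u \in X & withd_guard e g u.
Proof.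
have [/existsP[u /andP[uX wu]]|noW] := boolP [exists u in X, withd_guard e g u].
  by right; exists u.
left=> u uX; move/existsPn/(_ u): noW; rewrite uX withd_guard_beta /=.
by case: (g u) => /=; [rewrite negbK; right | left].
Qed.

Theorem mainTheorem17 (V : finType) (e : rel V) (Hg : simple_graph e)
  (g g' : config V) (t : {set V}) (r : V -> rule)
  (Htr : transition e g t r g')
  (Ht : (forall u, u \in t -> r u = Candidacy) \/
        (exists Y : {set V}, connected_candidate_set e g Y /\ t \subset Y /\
           (forall u, u \in t -> r u = Withdrawal)))
  (X : {set V}) (HX : connected_candidate_set e g X) (HXa : alive e g X) :
  vanishes e g' X \/
  exists X' : {set V}, connected_candidate_set e g' X' /\ alive e g' X' /\
    X' \subset X.
Proof.
have [e_sym _] := Hg; have [XcandX _] := HX.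
have [|[u uX wu]] := vanishes_or_withd e g' X; [by left | right].
have g'u : g' u by move: wu => /andP[].
exists (component e [set w in X | g' w] u); split; [split|split].
- exact: (component_survivors_candidate_set e_sym Htr XcandX).
- exact: (component_connected e_sym).
- by exists u; rewrite mem_component // inE uX g'u.
- apply: subset_trans (component_sub e _ u) _.
  by apply/subsetP => w; rewrite inE => /andP[].
Qed.
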